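(* Let $\kappa\in\mathcal O_F^\times$ with $d(\kappa)=2e-1$ and let $\delta\in\mathcal O_F^\times$. Then $2^{-1}\pi A(2,2\rho)\perp\langle\Delta\delta\rangle\cong\prec\delta\kappa^{\#},-\delta\kappa^{\#}\kappa\pi^{2-2e},\delta\kappa\succ$.
   Context: $F$ dyadic local field, $\mathcal O_F$, $\mathcal O_F^\times$, uniformizer $\pi$, valuation $\operatorname{ord}$, $e=\operatorname{ord}(2)$; $\mathfrak d(c)=\bigcap_{x\in F}(c-x^2)\mathcal O_F$, $d(c)=\operatorname{ord}(c^{-1}\mathfrak d(c))$; $\rho\in\mathcal O_F^\times$ with $\Delta=1-4\rho$, $\mathfrak d(\Delta)=4\mathcal O_F$. $\gamma A(\xi,\eta)$ is the binary lattice with Gram matrix $\begin{pmatrix}\gamma\xi&\gamma\\\gamma&\gamma\eta\end{pmatrix}$; $\langle a\rangle$ unary lattice. Since $d(\kappa)=2e-1$ is finite and even order, write $\kappa=s^2(1+r\pi^{2e-1})$ with $r,s\in\mathcal O_F^\times$ and set $\kappa^{\#}=1+4\rho r^{-1}\pi^{1-2e}$ (any such choice). BONG notation: $\prec a_1,\ldots,a_k\succ$ is the lattice $L$ having a BONG $x_1,\ldots,x_k$ with $Q(x_i)=a_i$, where $x_1,\ldots,x_k\in FL$ is a BONG of $L$ if $x_1\in L$ with $Q(x_1)\mathcal O_F$ equal to the norm ideal of $L$ (generated by $Q(L)$) and $x_2,\ldots,x_k$ is a BONG of the projection of $L$ onto $(Fx_1)^\perp$. *)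

From HB Require Import structures.
From mathcomp Require Import all_boot all_order all_algebra.
Set Implicit Arguments. Unset Strict Implicit. Unset Printing Implicit Defensive.
Import Order.TTheory GRing.Theory Num.Theory.
Local Open Scope ring_scope.

Section Defs.
Variables (F : fieldType) (ord : F -> int) (pi : F).

(* x lies in O_F (ord x >= 0, with 0 \in O_F) *)
Definition inO (x : F) : Prop := x = 0 \/ (0 <= ord x)%R.
Definition unitO (x : F) : Prop := x <> 0 /\ ord x = 0.
Definition inI (a y : F) : Prop := exists t, inO t /\ y = a * t.

(* F is a dyadic (non-archimedean) local field with normalized discrete
   valuation ord (ord 0 is irrelevant) and uniformizer pi. *)
Record dyadic_local_field : Prop := {
  ord_mul : forall x y, x <> 0 -> y <> 0 -> ord (x * y) = ord x + ord y;
  ord_add : forall x y, x <> 0 -> y <> 0 -> x + y <> 0 ->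
              (Num.min (ord x) (ord y) <= ord (x + y))%R;
  pi_neq0 : pi <> 0;
  ord_pi : ord pi = 1;
  complete : forall u : nat -> F,
      (forall k : int, exists N, forall m n, (N <= m)%N -> (N <= n)%N ->
          u m = u n \/ (k <= ord (u m - u n))%R) ->
      exists l, forall k : int, exists N, forall n, (N <= n)%N ->
          u n = l \/ (k <= ord (u n - l))%R;
  finite_residue : exists s : seq F, forall x, inO x ->
      exists2 t, t \in s & inI pi (x - t);
  two_neq0 : (2 : F) <> 0;
  dyadic : (0 < ord 2)%R
}.

Definition e_F : int := ord 2.

Definition dfrak (c y : F) : Prop := forall x : F, inI (c - x ^+ 2) y.

Definition d_eq (c : F) (n : int) : Prop :=
  forall y, dfrak c y <-> inI (c * pi ^ n) y.

(* Quadratic lattices: the O_F-module O_F^n in the quadratic space F^n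
   whose bilinear form has Gram matrix G in the standard basis. *)
Definition bil {n} (G : 'M[F]_n) (x y : 'rV[F]_n) : F := (x *m G *m y^T) 0 0.
Definition qf {n} (G : 'M[F]_n) (x : 'rV[F]_n) : F := bil G x x.
Definition std_lattice {n} (x : 'rV[F]_n) : Prop := forall i, inO (x 0 i).

Definition proj {n} (G : 'M[F]_n) (x y : 'rV[F]_n) : 'rV[F]_n :=
  y - (bil G y x / qf G x) *: x.

(* x_1, ..., x_k is a BONG of the lattice L (L an O_F-module, given as a
   predicate on F^n): x_1 \in L, Q(x_1) O_F = n(L) (the ideal generated by
   Q(L)), and x_2,...,x_k is a BONG of the projection of L onto (F x_1)^perp. *)
Fixpoint isBONG {n} (G : 'M[F]_n) (L : 'rV[F]_n -> Prop) (xs : seq 'rV[F]_n)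
  : Prop :=
  match xs with
  | [::] => forall y, L y -> y = 0
  | x :: xs' =>
      L x /\ qf G x <> 0 /\ (forall y, L y -> inI (qf G x) (qf G y)) /\
      isBONG G (fun z => exists2 y, L y & z = proj G x y) xs'
  end.

Definition gramA (gamma xi eta : F) : 'M[F]_2 :=
  \matrix_(i < 2, j < 2)
    (if (i == 0 :> nat) && (j == 0 :> nat) then gamma * xi
     else if (i == 1 :> nat) && (j == 1 :> nat) then gamma * eta
     else gamma).

Definition orth_unary (A : 'M[F]_2) (a : F) : 'M[F]_3 :=
  block_mx A 0 0 (a%:M : 'M[F]_1).

End Defs.

From HB Require Import structures.
From mathcomp Require Import all_boot all_order all_algebra.
From mathcomp Require Import ring zify.
From Stdlib Require Import ClassicalEpsilon.
Set Implicit Arguments. Unset Strict Implicit. Unset Printing Implicit Defensive.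
Import Order.TTheory GRing.Theory Num.Theory.
Local Open Scope ring_scope.

(* Write e = n + 1 and q = pi^n, so that pi^(2e-1) = pi q^2 and eps = 2 / (pi q) is a unit,
   and the form is Q(z) = pi (z0^2 + z0 z1 + rho z1^2) + Delta delta z2^2.  Since the residue
   field is perfect and y^2 + y = c is solvable for every c in pi O_F (Hensel), the norm form
   u1^2 + u1 u2 + rho u2^2 represents every unit; representing delta r s^2 kappa# gives
   x3 = (q u1, q u2, s) with Q(x3) = delta kappa.  A root y of y^2 + y = rho r pi q^2 then
   produces an integral x1 with Q(x1) = delta kappa# orthogonal to x3, and x2 is the projection
   of an integral vector orthogonally to x1.  For an orthogonal basis the BONG conditions
   reduce to divisibilities Q(x_i) | Q(...), which are checked on coordinates. *)

Section QuadraticSpace.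
Variables (F : fieldType) (n : nat) (G : 'M[F]_n).

Lemma bilDl x y z : bil G (x + y) z = bil G x z + bil G y z.
Proof. by rewrite /bil !mulmxDl mxE. Qed.

Lemma bilZl a x z : bil G (a *: x) z = a * bil G x z.
Proof. by rewrite /bil -!scalemxAl mxE. Qed.

Lemma bilBl x y z : bil G (x - y) z = bil G x z - bil G y z.
Proof. by rewrite bilDl -scaleN1r bilZl mulN1r. Qed.

Lemma bilZr a x z : bil G x (a *: z) = a * bil G x z.
Proof. by rewrite /bil linearZ /= -scalemxAr mxE. Qed.

Lemma qfZ a x : qf G (a *: x) = a ^+ 2 * qf G x.
Proof. by rewrite /qf bilZl bilZr mulrA expr2. Qed.

Lemma mulmx_gram_tr m (A : 'M_(m, n)) (X : 'M_n) i j :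
  (A *m G *m X^T) i j = bil G (row i A) (row j X).
Proof.
rewrite /bil !mxE; apply: eq_bigr => k _; rewrite !mxE; congr (_ * _).
by apply: eq_bigr => l _; rewrite !mxE.
Qed.

Lemma orthogonal_basis_nondeg (x : 'I_n -> 'rV[F]_n) :
  (forall i j, i != j -> bil G (x i) (x j) = 0) -> (forall i, qf G (x i) != 0) ->
  forall w, (forall i, bil G w (x i) = 0) -> w = 0.
Proof.
move=> xorth xaniso w wx.
pose X := \matrix_(i, j) x i 0 j.
have rowX i : row i X = x i by apply/rowP => j; rewrite !mxE.
have XGX : X *m G *m X^T = diag_mx (\row_i qf G (x i)).
  apply/matrixP => i j; rewrite mulmx_gram_tr !rowX !mxE.
  by have [->|ij] := eqVneq i j; rewrite ?mulr1n // xorth.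
have GX_unit : G *m X^T \in unitmx.
  have : X *m (G *m X^T) \in unitmx.
    rewrite mulmxA XGX unitmxE unitfE det_diag; apply/prodf_neq0 => i _.
    by rewrite mxE.
  by rewrite unitmx_mul => /andP[].
have wGX : w *m (G *m X^T) = 0.
  apply/rowP => i; rewrite mulmxA mulmx_gram_tr rowX mxE -[RHS](wx i).
  by congr bil; apply/rowP => j; rewrite mxE.
by rewrite -(mulmxK GX_unit w) wGX mul0mx.
Qed.

Hypothesis G_sym : G^T = G.

Lemma bilC x y : bil G x y = bil G y x.
Proof.
have -> : bil G x y = (x *m G *m y^T)^T 0 0 by rewrite [RHS]mxE.
by rewrite !trmx_mul trmxK G_sym mulmxA.
Qed.

Lemma bil_proj x y z : qf G x != 0 ->
  bil G (proj G x y) z = bil G y z - bil G y x / qf G x * bil G x z.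
Proof. by move=> x_aniso; rewrite /proj bilBl bilZl. Qed.

Lemma bil_proj_orth x y : qf G x != 0 -> bil G (proj G x y) x = 0.
Proof. by move=> x_aniso; rewrite bil_proj // divfK // subrr. Qed.

Lemma qf_proj x y : qf G x != 0 ->
  qf G (proj G x y) = qf G y - bil G y x ^+ 2 / qf G x.
Proof.
move=> x_aniso; rewrite {1}/qf bil_proj // (bilC x) bil_proj_orth // mulr0 subr0.
rewrite bilC bil_proj // (bilC x y).
by rewrite /qf in x_aniso *; field.
Qed.
End QuadraticSpace.

Section TernarySpace.
Variables (F : fieldType) (G : 'M[F]_3).
Hypothesis G_sym : G^T = G.
Variables (x1 x2 x3 : 'rV[F]_3).
Hypotheses (x1_aniso : qf G x1 != 0) (x2_aniso : qf G x2 != 0)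
  (x3_aniso : qf G x3 != 0).
Hypotheses (x12 : bil G x1 x2 = 0) (x13 : bil G x1 x3 = 0)
  (x23 : bil G x2 x3 = 0).

Lemma proj_proj_orthogonal y :
  proj G x2 (proj G x1 y) = (bil G y x3 / qf G x3) *: x3.
Proof.
pose x (i : 'I_3) := nth 0 [:: x1; x2; x3] i.
have x_orth i j : i != j -> bil G (x i) (x j) = 0.
  by case: i => [[|[|[|?]]] ?]; case: j => [[|[|[|?]]] ?] //= _; rewrite (bilC G_sym).
have x_aniso i : qf G (x i) != 0 by case: i => [[|[|[|?]]] ?].
set p := proj G x2 (proj G x1 y).
have p1 : bil G p x1 = 0.
  by rewrite bil_proj // (bilC G_sym x2) x12 mulr0 subr0 bil_proj_orth.
have p2 : bil G p x2 = 0 by rewrite bil_proj_orth.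
have p3 : bil G p x3 = bil G y x3.
  by rewrite !bil_proj // x13 x23 !(mulr0, subr0).
apply/eqP; rewrite -subr_eq0; apply/eqP.
apply: (orthogonal_basis_nondeg x_orth x_aniso) => -[[|[|[|?]]] ?] //=;
  rewrite /x /= bilBl bilZl.
- by rewrite p1 (bilC G_sym x3) x13 mulr0 subr0.
- by rewrite p2 (bilC G_sym x3) x23 mulr0 subr0.
- by rewrite p3 divfK // subrr.
Qed.

Lemma isBONG_orthogonal (ord : F -> int) (L : 'rV[F]_3 -> Prop) y2 :
  x2 = proj G x1 y2 -> L x1 -> L y2 ->
  (exists2 y3, L y3 & bil G y3 x3 = qf G x3) ->
  (forall z, L z -> inI ord (qf G x1) (qf G z)) ->
  (forall z, L z -> inI ord (qf G x2) (qf G (proj G x1 z))) ->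
  (forall z, L z -> inI ord (qf G x3) (bil G z x3 ^+ 2 / qf G x3)) ->
  isBONG ord G L [:: x1; x2; x3].
Proof.
move=> x2E Lx1 Ly2 [y3 Ly3 y3x3] n1 n2 n3.
have ppE := proj_proj_orthogonal.
split=> //; split; first exact/eqP.
split=> //.
split; first by exists y2.
split; first exact/eqP.
split; first by move=> _ [z Lz ->]; apply: n2.
split; first by exists (proj G x1 y3); [exists y3|rewrite ppE y3x3 divff ?scale1r].
split; first exact/eqP.
split.
  move=> _ [_ [z Lz ->] ->]; rewrite ppE qfZ expr_div_n mulrAC.
  by rewrite [qf G x3 ^+ 2]expr2 invfM mulrA mulfK //; apply: n3.
by move=> _ [_ [_ [z Lz ->] ->] ->]; rewrite ppE /proj bilZl divfK // subrr.
Qed.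
End TernarySpace.

Lemma bil_block_diag (F : fieldType) m n (A : 'M[F]_m) (D : 'M[F]_n) x1 x2 y1 y2 :
  bil (block_mx A 0 0 D) (row_mx x1 x2) (row_mx y1 y2) = bil A x1 y1 + bil D x2 y2.
Proof.
by rewrite /bil tr_row_mx mul_row_block !mulmx0 addr0 add0r mul_row_col mxE.
Qed.

Section Coordinates.
Variable F : fieldType.

Definition row2 (a b : F) : 'rV[F]_2 := \row_j [:: a; b]`_j.
Definition row3 (a b c : F) : 'rV[F]_3 := row_mx (row2 a b) c%:M.

Lemma gramA_sym (g xi eta : F) : (gramA g xi eta)^T = gramA g xi eta.
Proof. by apply/matrixP => -[[|[|?]] ?] [[|[|?]] ?]; rewrite !mxE. Qed.

Lemma orth_unary_sym (A : 'M[F]_2) a : A^T = A -> (orth_unary A a)^T = orth_unary A a.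
Proof.
by move=> A_sym; have := tr_block_mx A 0 0 (a%:M : 'M_1); rewrite A_sym !trmx0 tr_scalar_mx.
Qed.

Lemma bil_orth_unary_gramA (g xi eta d a b c a' b' c' : F) :
  bil (orth_unary (gramA g xi eta) d) (row3 a b c) (row3 a' b' c') =
  g * xi * a * a' + g * (a * b' + b * a') + g * eta * b * b' + d * c * c'.
Proof.
apply: eq_trans (bil_block_diag (gramA g xi eta) d%:M (row2 a b) c%:M (row2 a' b') c'%:M) _.
by rewrite /bil !(mxE, big_ord_recr, big_ord0) /=; ring.
Qed.

Lemma scale_row3 (k a b c : F) : k *: row3 a b c = row3 (k * a) (k * b) (k * c).
Proof.
apply/rowP => j; rewrite !mxE; case: splitP => i _; rewrite !mxE.
  by case: i => [[|[|?]] ?].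
by rewrite ord1 eqxx !mulr1n.
Qed.

Lemma std_latticeP (ord : F -> int) z : std_lattice ord z ->
  exists a b c, [/\ z = row3 a b c, inO ord a, inO ord b & inO ord c].
Proof.
move=> zO; exists (z 0 (lshift 1 (0 : 'I_2))), (z 0 (lshift 1 (1 : 'I_2))).
exists (z 0 (rshift 2 (0 : 'I_1))); split => //.
apply/rowP => j; rewrite !mxE; case: splitP => k jk; rewrite !mxE.
  by case: k jk => [[|[|?]] ?] //= jk; congr (z 0 _); apply: val_inj.
by rewrite ord1 eqxx mulr1n; congr (z 0 _); apply: val_inj; rewrite /= jk ord1.
Qed.

Lemma std_lattice_row3 (ord : F -> int) a b c :
  inO ord a -> inO ord b -> inO ord c -> std_lattice ord (row3 a b c).
Proof.
move=> aO bO cO j; rewrite !mxE; case: splitP => k _; rewrite !mxE.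
  by case: k => [[|[|?]] ?].
by rewrite ord1 eqxx mulr1n.
Qed.
End Coordinates.

Section Valuation.
Variables (F : fieldType) (ord : F -> int) (pi : F).
Hypothesis HF : dyadic_local_field ord pi.

Definition val_ge (k : int) (x : F) : Prop := x = 0 \/ (k <= ord x)%R.

Lemma ordM x y : x != 0 -> y != 0 -> ord (x * y) = ord x + ord y.
Proof. by move=> /eqP x0 /eqP y0; apply: (ord_mul HF). Qed.

Lemma ord1 : ord 1 = 0.
Proof.
by have := ordM (oner_neq0 F) (oner_neq0 F); rewrite mulr1; set o := ord 1 => ?; lia.
Qed.

Lemma ordV x : x != 0 -> ord x^-1 = - ord x.
Proof.
by move=> x0; have := ordM x0 (invr_neq0 x0); rewrite mulfV // ord1 => ?; lia.
Qed.

Lemma ordN x : x != 0 -> ord (- x) = ord x.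
Proof.
move=> x0; have N1 : (-1 : F) != 0 by rewrite oppr_eq0 oner_neq0.
have := ordM N1 N1; rewrite mulrNN mulr1 ord1 => ordN1.
by rewrite -mulN1r (ordM N1 x0); lia.
Qed.

Lemma ordX x m : x != 0 -> ord (x ^+ m) = m%:Z * ord x.
Proof.
move=> x0; elim: m => [|m IH]; first by rewrite expr0 ord1 mul0r.
by rewrite exprS (ordM x0) ?expf_neq0 // IH; lia.
Qed.

Lemma val_geW k l x : (k <= l)%R -> val_ge l x -> val_ge k x.
Proof. by move=> kl [->|lx]; [left | right; lia]. Qed.

Lemma val_geN k x : val_ge k x -> val_ge k (- x).
Proof.
have [->|x0] := eqVneq x 0; first by rewrite oppr0.
by case=> [/eqP|kx]; [rewrite (negPf x0) | right; rewrite ordN].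
Qed.

Lemma val_geD k x y : val_ge k x -> val_ge k y -> val_ge k (x + y).
Proof.
have [->|x0] := eqVneq x 0; first by rewrite add0r.
have [->|y0] := eqVneq y 0; first by rewrite addr0.
have [->|xy0] := eqVneq (x + y) 0; first by left.
case=> [/eqP|kx]; first by rewrite (negPf x0).
case=> [/eqP|ky]; first by rewrite (negPf y0).
right; move/eqP: x0 => x0; move/eqP: y0 => y0; move/eqP: xy0 => xy0.
have := ord_add HF x0 y0 xy0.
by apply: le_trans; rewrite le_min kx ky.
Qed.

Lemma val_geB k x y : val_ge k x -> val_ge k y -> val_ge k (x - y).
Proof. by move=> kx ky; apply/val_geD/val_geN. Qed.

Lemma val_geM k l x y : val_ge k x -> val_ge l y -> val_ge (k + l) (x * y).
Proof.
have [->|x0] := eqVneq x 0; first by rewrite mul0r; left.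
have [->|y0] := eqVneq y 0; first by rewrite mulr0; left.
case=> [/eqP|kx]; first by rewrite (negPf x0).
case=> [/eqP|ly]; first by rewrite (negPf y0).
by right; rewrite ordM //; lia.
Qed.

Lemma val_geM_inO k x y : val_ge k x -> inO ord y -> val_ge k (x * y).
Proof. by move=> kx y0; have := val_geM kx y0; rewrite addr0. Qed.

Lemma inO_val_geM k x y : inO ord x -> val_ge k y -> val_ge k (x * y).
Proof. by move=> x0 ky; have := val_geM x0 ky; rewrite add0r. Qed.

Lemma val_ge_all x : (forall k, val_ge k x) -> x = 0.
Proof. by move=> x_small; case: (x_small (ord x + 1)) => //; lia. Qed.

Lemma inOM x y : inO ord x -> inO ord y -> inO ord (x * y).
Proof. exact: val_geM_inO. Qed.

Lemma inOD x y : inO ord x -> inO ord y -> inO ord (x + y).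
Proof. exact: val_geD. Qed.

Lemma inON x : inO ord x -> inO ord (- x).
Proof. exact: val_geN. Qed.

Lemma inO1 : inO ord 1.
Proof. by right; rewrite ord1. Qed.

Lemma inOX x m : inO ord x -> inO ord (x ^+ m).
Proof.
move=> x0; elim: m => [|m IH]; first exact: inO1.
by rewrite exprS; apply: inOM.
Qed.

Lemma val_ge_pi : val_ge 1 pi.
Proof. by right; rewrite (ord_pi HF). Qed.

Lemma val_ge_two : val_ge 1 2.
Proof. by right; have := dyadic HF; lia. Qed.

Lemma val_ge1_pi_multiple x : inI ord pi x -> val_ge 1 x.
Proof. by case=> t [t0 ->]; have := val_geM val_ge_pi t0; rewrite addr0. Qed.

Lemma inI_of_inO a b : a != 0 -> inO ord (b / a) -> inI ord a b.
Proof. by move=> a0 ba; exists (b / a); split; rewrite // mulrC divfK. Qed.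

Lemma unitO_inO x : unitO ord x -> inO ord x.
Proof. by case=> _ x0; right; rewrite x0. Qed.

Lemma unitO1 : unitO ord 1.
Proof. by split; [exact/eqP/oner_neq0 | exact: ord1]. Qed.

Lemma unitOV x : unitO ord x -> unitO ord x^-1.
Proof.
by case=> /eqP x0 ox; split; [apply/eqP; rewrite invr_eq0 | rewrite ordV // ox].
Qed.

Lemma unitOM x y : unitO ord x -> unitO ord y -> unitO ord (x * y).
Proof.
case=> /eqP x0 ox [/eqP y0 oy]; split; first exact/eqP/mulf_neq0.
by rewrite ordM // ox oy.
Qed.

Lemma unitO_val_ge1 x : unitO ord x -> ~ val_ge 1 x.
Proof. by case=> x0 ox [|]; [|rewrite ox]. Qed.

Lemma unitO_of x : inO ord x -> ~ val_ge 1 x -> unitO ord x.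
Proof.
case=> [x0|ox] x_unit; first by case: x_unit; left.
split; first by move=> x0; apply: x_unit; left.
by apply/eqP; rewrite eq_le ox andbT; apply/negP => ?; apply: x_unit; right; lia.
Qed.

Lemma unitOD x y : unitO ord x -> val_ge 1 y -> unitO ord (x + y).
Proof.
move=> x_unit y1; apply: unitO_of.
  by apply: val_geD; [exact: unitO_inO | exact: val_geW y1].
by move=> xy1; apply: (unitO_val_ge1 x_unit); rewrite -(addrK y x); apply: val_geB.
Qed.

Lemma cvg_of_increments (u : nat -> F) :
  (forall m, val_ge m%:Z (u m.+1 - u m)) ->
  exists l, forall k, exists N, forall m, (N <= m)%N -> val_ge k (u m - l).
Proof.
move=> du.
have tail N m : (N <= m)%N -> val_ge N%:Z (u m - u N).
  elim: m => [|m IH]; first by rewrite leqn0 => /eqP ->; rewrite subrr; left.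
  rewrite leq_eqVlt => /orP[/eqP ->|]; first by rewrite subrr; left.
  rewrite ltnS => Nm; rewrite -(subrKA (u m)).
  by apply: val_geD; [apply: val_geW (du m); lia | exact: IH].
have [l ul] : exists l, forall k : int, exists N, forall m, (N <= m)%N ->
    u m = l \/ (k <= ord (u m - l))%R.
  apply: (complete HF) => k; exists `|k|%N => m n km kn.
  have : val_ge `|k|%N (u m - u n).
    have -> : u m - u n = (u m - u `|k|%N) - (u n - u `|k|%N) by ring.
    by apply: val_geB; apply: tail.
  case=> [/eqP|kmn]; first by rewrite subr_eq0 => /eqP ->; left.
  by right; apply: le_trans kmn; lia.
exists l => k; have [N uN] := ul k; exists N => m /uN[->|]; last by right.
by rewrite subrr; left.
Qed.

Lemma artin_schreier_root z : val_ge 1 z -> exists y, val_ge 1 y /\ y ^+ 2 + y = z.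
Proof.
move=> z1; pose u n := iter n (fun y => z - y ^+ 2) 0.
have uS n : u n.+1 = z - u n ^+ 2 by [].
have u_small n : val_ge 1 (u n).
  elim: n => [|n IH]; first by left.
  rewrite uS; apply: val_geB => //.
  by apply: (@val_geW 1 (1 + 1)); rewrite ?expr2 //; apply: val_geM.
have du n : val_ge n.+1%:Z (u n.+1 - u n).
  elim: n => [|n IH]; first by rewrite subr0 uS expr2 mulr0 subr0.
  have -> : u n.+2 - u n.+1 = - ((u n.+1 - u n) * (u n.+1 + u n)) by rewrite !uS; ring.
  apply/val_geN/(@val_geW _ (n.+1%:Z + 1)); first lia.
  by apply: val_geM => //; apply: val_geD.
have [l ul] : exists l, forall k, exists N, forall m, (N <= m)%N -> val_ge k (u m - l).
  by apply: cvg_of_increments => n; apply: val_geW (du n); lia.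
have l_small : val_ge 1 l.
  have [N uN] := ul 1; rewrite -(subrK (u N) l) -opprB.
  by apply: val_geD; [apply/val_geN/uN | apply: u_small].
exists l; split => //; apply/eqP; rewrite -subr_eq0; apply/eqP/val_ge_all => k.
have [N uN] := ul k.
have -> : l ^+ 2 + l - z = (l - u N) * (l + u N) + (l - u N.+1) by rewrite uS; ring.
have lN m : (N <= m)%N -> val_ge k (l - u m) by move=> Nm; rewrite -opprB; apply/val_geN/uN.
apply: val_geD; last exact: lN.
rewrite -[k]addr0; apply: val_geM; first exact: lN.
by apply: (@val_geW 0 1) => //; apply: val_geD.
Qed.

(* The residue field has characteristic 2, so squaring is injective on it. *)
Lemma val_ge1_sub_sqr x y : inO ord x -> inO ord y ->
  val_ge 1 (x ^+ 2 - y ^+ 2) -> val_ge 1 (x - y).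
Proof.
move=> x0 y0 xy2.
have sqr_small : val_ge 1 ((x - y) ^+ 2).
  have -> : (x - y) ^+ 2 = (x ^+ 2 - y ^+ 2) - 2 * y * (x - y) by ring.
  apply: val_geB => //; rewrite -[1]addr0 -[1 + 0]addr0.
  by apply: val_geM; [apply: val_geM; [exact: val_ge_two|] | apply: val_geB].
have [-> |xy0] := eqVneq (x - y) 0; first by left.
case: sqr_small => [/eqP|]; first by rewrite expf_eq0 (negPf xy0) andbF.
by rewrite ordX // => ?; right; lia.
Qed.

Lemma residue_frobenius_periodic u : inO ord u ->
  exists2 m, (0 < m)%N & val_ge 1 (u - u ^+ (2 ^ m)).
Proof.
move=> u0; have [reps reps_cover] := finite_residue HF.
pose g m := u ^+ (2 ^ m).
have gS m : g m.+1 = g m ^+ 2 by rewrite /g expnSr exprM.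
have g_class m : exists i : 'I_(size reps), val_ge 1 (g m - nth 0 reps i).
  have [t t_rep gt] := reps_cover (g m) (inOX _ u0).
  exists (Ordinal (etrans (index_mem t reps) t_rep)).
  by rewrite /= nth_index //; apply: val_ge1_pi_multiple.
pose c m := proj1_sig (constructive_indefinite_description _ (g_class m)).
have gc m : val_ge 1 (g m - nth 0 reps (c m)).
  exact: proj2_sig (constructive_indefinite_description _ (g_class m)).
have periodic a b : (a < b)%N -> c a = c b -> val_ge 1 (g 0 - g (b - a)%N).
  move=> ab cab; have : val_ge 1 (g a - g (a + (b - a))%N).
    rewrite subnKC ?(ltnW ab) //.
    have -> : g a - g b = (g a - nth 0 reps (c a)) - (g b - nth 0 reps (c b)).
      by rewrite cab; ring.
    by apply: val_geB.
  move: (b - a)%N => m; elim: a {ab cab} => [|a IH]; first by rewrite add0n.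
  by rewrite addSn !gS => ga; apply: IH; apply: val_ge1_sub_sqr => //; apply: inOX.
pose cf (j : 'I_(size reps).+1) := c j.
have : ~~ injectiveb cf.
  by apply/injectiveP => /leq_card; rewrite !card_ord ltnn.
case/injectivePn => i [j ij cij].
have [lt_ij|lt_ji] := ltnP i j.
  by exists (j - i)%N; [rewrite subn_gt0 | exact: periodic].
have {}lt_ji : (j < i)%N.
  by rewrite ltn_neqAle lt_ji andbT eq_sym; apply: contra ij => /eqP/val_inj ->.
by exists (i - j)%N; [rewrite subn_gt0 | exact: periodic].
Qed.

Lemma residue_square u : inO ord u -> exists b, inO ord b /\ val_ge 1 (u - b ^+ 2).
Proof.
move=> u0; have [m m0 um] := residue_frobenius_periodic u0.
exists (u ^+ (2 ^ m.-1)); split; first exact: inOX.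
by rewrite -exprM -expnSr prednK.
Qed.

Lemma norm_form_surjective rho V : unitO ord rho -> unitO ord V ->
  exists u1 u2, [/\ inO ord u1, inO ord u2 & u1 ^+ 2 + u1 * u2 + rho * u2 ^+ 2 = V].
Proof.
move=> rho_unit V_unit.
have Vrho_unit : unitO ord (V / rho) by apply/unitOM/unitOV.
have [b [b0 b_sqrt]] := residue_square (unitO_inO Vrho_unit).
have b_unit : unitO ord b.
  apply: unitO_of => // b1; apply: (unitO_val_ge1 Vrho_unit).
  rewrite -(subrK (b ^+ 2) (V / rho)); apply: val_geD => //.
  by rewrite -[1]addr0; apply: val_geM => //; rewrite expr2 -[0]addr0; apply: val_geM.
have [[/eqP rho0 _] [/eqP b0' _]] := (rho_unit, b_unit).
pose z := rho * (V / rho - b ^+ 2) / b ^+ 2.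
have z_small : val_ge 1 z.
  rewrite /z -[1]add0r -[0 + 1]addr0 -exprVn.
  by apply: val_geM; [apply: val_geM; [exact: unitO_inO|] | apply/inOX/unitO_inO/unitOV].
have [a [a_small aE]] := artin_schreier_root z_small.
exists (b * a), b; split => //; first by apply: inOM => //; apply: val_geW a_small.
have -> : (b * a) ^+ 2 + b * a * b + rho * b ^+ 2 = b ^+ 2 * (a ^+ 2 + a) + rho * b ^+ 2.
  by ring.
by rewrite aE /z; field; rewrite rho0 b0'.
Qed.
End Valuation.

Section Witnesses.
Variables (F : fieldType) (pi q r s rho delta y u1 u2 : F).

Definition Delta := 1 - 4 * rho.
Definition gram := orth_unary (gramA (2^-1 * pi) 2 (2 * rho)) (Delta * delta).
Definition kappa_sharp := 1 + 4 * rho * r^-1 * (pi * q ^+ 2)^-1.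
Definition kappa := s ^+ 2 * (1 + r * (pi * q ^+ 2)).
Definition eps := 2 / (pi * q).
Definition x1_scale := eps / (Delta * r * s).

Definition x1 := row3 (x1_scale * (- (2 * rho + y) * u1 - rho * (1 + 2 * y) * u2))
  (x1_scale * ((1 + 2 * y) * u1 + (1 + y - 2 * rho) * u2)) (- kappa_sharp / Delta).
Definition y2 := row3 (- (u1 + 2 * rho * u2)) (2 * u1 + u2) 0.
Definition x2 := proj gram x1 y2.
Definition x3 := row3 (q * u1) (q * u2) s.

Lemma gram_sym : gram^T = gram.
Proof. exact/orth_unary_sym/gramA_sym. Qed.

Section Algebra.
Hypotheses (two_neq0 : 2 != 0 :> F) (pi_neq0 : pi != 0) (q_neq0 : q != 0)
  (r_neq0 : r != 0) (s_neq0 : s != 0)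
  (delta_neq0 : delta != 0) (Delta_neq0 : Delta != 0) (kappa_sharp_neq0 : kappa_sharp != 0).
Hypotheses (y_root : y ^+ 2 + y = rho * r * (pi * q ^+ 2))
  (u_norm : u1 ^+ 2 + u1 * u2 + rho * u2 ^+ 2 = delta * r * s ^+ 2 * kappa_sharp).

Let rhoE : rho = (y ^+ 2 + y) / (r * pi * q ^+ 2).
Proof. by rewrite y_root; field; rewrite r_neq0 pi_neq0 q_neq0. Qed.

Let deltaE : delta = (u1 ^+ 2 + u1 * u2 + rho * u2 ^+ 2) / (r * s ^+ 2 * kappa_sharp).
Proof. by rewrite u_norm; field; rewrite r_neq0 s_neq0 kappa_sharp_neq0. Qed.

Let Delta_num_neq0 : r * pi * q ^+ 2 - 4 * (y ^+ 2 + y) != 0.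
Proof.
move: Delta_neq0; rewrite /Delta rhoE; apply: contraNneq => num0.
rewrite (_ : 1 - _ = (r * pi * q ^+ 2 - 4 * (y ^+ 2 + y)) / (r * pi * q ^+ 2)).
  by rewrite num0 mul0r.
by field; rewrite r_neq0 pi_neq0 q_neq0.
Qed.

(* Stated in the exact shape of the side condition that [field] produces below. *)
Let kappa_sharp_num_neq0 : r * pi * q ^+ 2 * r * (pi * q ^+ 2) + 4 * (y ^+ 2 + y) != 0.
Proof.
move: kappa_sharp_neq0; rewrite /kappa_sharp rhoE; apply: contraNneq => num0.
rewrite (_ : 1 + _ = (r * pi * q ^+ 2 * r * (pi * q ^+ 2) + 4 * (y ^+ 2 + y))
  / (r * pi * q ^+ 2) ^+ 2).
  by rewrite num0 mul0r.
by field; rewrite r_neq0 pi_neq0 q_neq0.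
Qed.

(* [deltaE] mentions [kappa_sharp], so it must be used before [kappa_sharp] is unfolded. *)
Ltac witness_field :=
  rewrite deltaE /x1 /x3 /y2 /x1_scale /eps /kappa /kappa_sharp /Delta;
  rewrite !bil_orth_unary_gramA rhoE; field;
  by rewrite ?r_neq0 ?pi_neq0 ?q_neq0 ?s_neq0 ?Delta_num_neq0 ?kappa_sharp_num_neq0 ?two_neq0.

Lemma qf_x1 : qf gram x1 = delta * kappa_sharp.
Proof. rewrite /qf /gram. witness_field. Qed.

Lemma qf_x3 : qf gram x3 = delta * kappa.
Proof. rewrite /qf /gram. witness_field. Qed.

Lemma bil_x1_x3 : bil gram x1 x3 = 0.
Proof. rewrite /gram. witness_field. Qed.

Lemma bil_y2_x3 : bil gram y2 x3 = 0.
Proof. rewrite /gram. witness_field. Qed.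

Let qf_x1_neq0 : qf gram x1 != 0.
Proof. by rewrite qf_x1 mulf_neq0. Qed.

Lemma bil_x2_x1 : bil gram x2 x1 = 0.
Proof. exact: bil_proj_orth. Qed.

Lemma bil_x2_x3 : bil gram x2 x3 = 0.
Proof. by rewrite bil_proj // bil_y2_x3 bil_x1_x3 mulr0 subrr. Qed.

Lemma qf_x2 : qf gram x2 = - delta * kappa_sharp * kappa * (q ^+ 2)^-1.
Proof.
have clear_denominators : delta * kappa_sharp * qf gram y2 - bil gram y2 x1 ^+ 2 =
    - (delta * kappa_sharp) ^+ 2 * kappa / q ^+ 2.
  rewrite /qf /gram; witness_field.
rewrite (qf_proj gram_sym) // qf_x1; apply: (mulfI qf_x1_neq0); rewrite qf_x1.
by rewrite mulrBr [X in _ - X]mulrC divfK ?mulf_neq0 // clear_denominators; ring.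
Qed.
End Algebra.

Section Units.
Variables (ord : F -> int) (n : nat).
Hypothesis HF : dyadic_local_field ord pi.
Hypotheses (q_def : q = pi ^+ n) (ord2 : ord 2 = n.+1%:Z).
Hypotheses (rho_unit : unitO ord rho) (r_unit : unitO ord r) (s_unit : unitO ord s).

Let pi_nz : pi != 0. Proof. by apply/eqP; exact: pi_neq0 HF. Qed.
Let q_nz : q != 0. Proof. by rewrite q_def expf_neq0. Qed.
Let two_nz : 2 != 0 :> F. Proof. by apply/eqP; exact: two_neq0 HF. Qed.
Let r_nz : r != 0. Proof. by case: r_unit => /eqP. Qed.
Let twoO : inO ord 2. Proof. exact: val_geW (val_ge_two HF). Qed.
Let piO : inO ord pi. Proof. exact: val_geW (val_ge_pi HF). Qed.
Let qO : inO ord q. Proof. rewrite q_def; exact: (inOX HF n piO). Qed.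

Lemma eps_unit : unitO ord eps.
Proof.
split; first exact/eqP/mulf_neq0/invr_neq0/mulf_neq0.
rewrite /eps !(ordM HF) ?invr_eq0 ?mulf_neq0 // (ordV HF) ?mulf_neq0 //.
by rewrite (ordM HF) // q_def (ordX HF) // (ord_pi HF) ord2; lia.
Qed.

Lemma Delta_unit : unitO ord Delta.
Proof.
apply: (unitOD HF (unitO1 HF)).
apply: (val_geN HF); rewrite (_ : 4 * rho = 2 * (2 * rho)); last by ring.
exact: (val_geM_inO HF (val_ge_two HF) (inOM HF twoO (unitO_inO rho_unit))).
Qed.

Lemma kappa_sharp_unit : unitO ord kappa_sharp.
Proof.
rewrite (_ : kappa_sharp = 1 + eps ^+ 2 * pi * (rho / r)); last first.
  by rewrite /kappa_sharp /eps; field; rewrite pi_nz q_nz r_nz.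
apply: (unitOD HF (unitO1 HF)); apply: (val_geM_inO HF).
  exact: (inO_val_geM HF (inOX HF 2 (unitO_inO eps_unit)) (val_ge_pi HF)).
exact: (inOM HF (unitO_inO rho_unit) (unitO_inO (unitOV HF r_unit))).
Qed.

Lemma kappa_unit : unitO ord kappa.
Proof.
apply: (unitOM HF); first by rewrite expr2; apply: (unitOM HF).
apply: (unitOD HF (unitO1 HF)); apply: (inO_val_geM HF (unitO_inO r_unit)).
exact: (val_geM_inO HF (val_ge_pi HF) (inOX HF 2 qO)).
Qed.

Section Integrality.
Hypothesis delta_unit : unitO ord delta.
Hypotheses (yO : inO ord y) (u1O : inO ord u1) (u2O : inO ord u2).
Hypotheses (y_root : y ^+ 2 + y = rho * r * (pi * q ^+ 2))
  (u_norm : u1 ^+ 2 + u1 * u2 + rho * u2 ^+ 2 = delta * r * s ^+ 2 * kappa_sharp).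

Let s_nz : s != 0. Proof. by case: s_unit => /eqP. Qed.
Let delta_nz : delta != 0. Proof. by case: delta_unit => /eqP. Qed.
Let Delta_nz : Delta != 0. Proof. by case: Delta_unit => /eqP. Qed.
Let kappa_sharp_nz : kappa_sharp != 0. Proof. by case: kappa_sharp_unit => /eqP. Qed.
Let kappa_nz : kappa != 0. Proof. by case: kappa_unit => /eqP. Qed.

Ltac inO_closure := repeat first
  [ assumption | exact: (inO1 HF)
  | exact: eps_unit | exact: Delta_unit | exact: kappa_sharp_unit | exact: kappa_unit
  | exact: (unitO_inO eps_unit) | exact: (unitO_inO Delta_unit)
  | exact: (unitO_inO kappa_sharp_unit) | exact: (unitO_inO kappa_unit)
  | apply: (inOD HF) | apply: (inON HF) | apply: (inOM HF) | apply: (inOX HF)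
  | apply: unitO_inO | apply: (unitOV HF) | apply: (unitOM HF) ].

Lemma qf_integral z : std_lattice ord z -> inO ord (qf gram z).
Proof.
move=> /std_latticeP[a [b [c [-> aO bO cO]]]]; rewrite /qf /gram bil_orth_unary_gramA.
have -> : 2^-1 * pi * 2 * a * a + 2^-1 * pi * (a * b + b * a) + 2^-1 * pi * (2 * rho) * b * b
    + Delta * delta * c * c = pi * (a ^+ 2 + a * b + rho * b ^+ 2) + Delta * delta * c ^+ 2.
  by field.
inO_closure.
Qed.

(* The factor q compensates the 1/2 in the off-diagonal entries: pi q / 2 = eps^-1. *)
Lemma bil_scaled_integral z a b c : std_lattice ord z ->
  inO ord a -> inO ord b -> inO ord c -> inO ord (bil gram z (row3 (q * a) (q * b) c)).
Proof.
move=> /std_latticeP[a0 [b0 [c0 [-> a0O b0O c0O]]]] aO bO cO.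
rewrite /gram bil_orth_unary_gramA.
have -> : 2^-1 * pi * 2 * a0 * (q * a) + 2^-1 * pi * (a0 * (q * b) + b0 * (q * a))
    + 2^-1 * pi * (2 * rho) * b0 * (q * b) + Delta * delta * c0 * c =
    pi * q * (a0 * a + rho * b0 * b) + eps^-1 * (a0 * b + b0 * a) + Delta * delta * c0 * c.
  by rewrite /eps; field; rewrite pi_nz q_nz.
inO_closure.
Qed.

Lemma x1_lattice : std_lattice ord x1.
Proof. apply: std_lattice_row3; rewrite /x1_scale; inO_closure. Qed.

Lemma q_bil_x1_integral z : std_lattice ord z -> inO ord (q * bil gram z x1).
Proof.
move=> zO; have [a [b [c [x1E aO bO cO]]]] := std_latticeP x1_lattice.
by rewrite -bilZr x1E scale_row3; apply: bil_scaled_integral => //; inO_closure.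
Qed.

Lemma isBONG_witnesses : isBONG ord gram (std_lattice ord) [:: x1; x2; x3].
Proof.
have Q1 : qf gram x1 = delta * kappa_sharp by apply: qf_x1.
have Q2 : qf gram x2 = - delta * kappa_sharp * kappa * (q ^+ 2)^-1 by apply: qf_x2.
have Q3 : qf gram x3 = delta * kappa by apply: qf_x3.
have Q1_nz : qf gram x1 != 0 by rewrite Q1 mulf_neq0.
have Q2_nz : qf gram x2 != 0.
  rewrite Q2 !mulNr oppr_eq0 mulf_neq0 ?invr_eq0 ?expf_neq0 //.
  exact: mulf_neq0 (mulf_neq0 delta_nz kappa_sharp_nz) kappa_nz.
have Q3_nz : qf gram x3 != 0 by rewrite Q3 mulf_neq0.
have B12 : bil gram x1 x2 = 0 by rewrite (bilC gram_sym); apply: bil_x2_x1.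
have B13 : bil gram x1 x3 = 0 by apply: bil_x1_x3.
have B23 : bil gram x2 x3 = 0 by apply: bil_x2_x3.
apply: (isBONG_orthogonal gram_sym Q1_nz Q2_nz Q3_nz B12 B13 B23 erefl).
- exact: x1_lattice.
- by apply: std_lattice_row3; [| | left]; inO_closure.
- exists (row3 0 0 (kappa / (Delta * s))).
    by apply: std_lattice_row3; [left | left | inO_closure].
  by rewrite Q3 /x3 /gram bil_orth_unary_gramA; field; rewrite Delta_nz s_nz.
- move=> z /qf_integral zO; apply: inI_of_inO => //; rewrite Q1; inO_closure.
- move=> z zL; have zO := qf_integral zL; have z1O := q_bil_x1_integral zL.
  apply: inI_of_inO => //; rewrite (qf_proj gram_sym) // Q1 Q2.
  rewrite (_ : _ / _ = - ((q ^+ 2 * qf gram z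
      - (q * bil gram z x1) ^+ 2 / (delta * kappa_sharp)) / (delta * kappa_sharp * kappa))).
    by inO_closure.
  by field; rewrite oppr_eq0 q_nz delta_nz kappa_sharp_nz kappa_nz.
- move=> z zL; have z3O : inO ord (bil gram z x3).
    by apply: bil_scaled_integral => //; exact: unitO_inO.
  apply: inI_of_inO => //; rewrite (_ : _ / _ = (bil gram z x3 / qf gram x3) ^+ 2).
    by rewrite Q3; inO_closure.
  by field.
Qed.

Lemma witnesses_spec :
  isBONG ord gram (std_lattice ord) [:: x1; x2; x3] /\ qf gram x1 = delta * kappa_sharp /\
  qf gram x2 = - delta * kappa_sharp * kappa * (q ^+ 2)^-1 /\ qf gram x3 = delta * kappa.
Proof.
split; first exact: isBONG_witnesses.
by split; [apply: qf_x1 | split; [apply: qf_x2 | apply: qf_x3]].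
Qed.
End Integrality.
End Units.
End Witnesses.

Lemma exprz_twice_shifted (R : unitRingType) (x : R) (n : nat) (e : int) :
  e = n.+1 :> int -> [/\ x ^ (2 * e - 1) = x * (x ^+ n) ^+ 2,
    x ^ (1 - 2 * e) = (x * (x ^+ n) ^+ 2)^-1 & x ^ (2 - 2 * e) = ((x ^+ n) ^+ 2)^-1].
Proof.
move=> ->; rewrite -exprM -exprS.
have -> : 2 * n.+1%:Z - 1 = (n * 2).+1 by lia.
have -> : 1 - 2 * n.+1%:Z = - (n * 2).+1%:Z by lia.
have -> : 2 - 2 * n.+1%:Z = - (n * 2)%:Z by lia.
by rewrite -!exprnN -exprnP.
Qed.

Theorem lemma3p9 (F : fieldType) (ord : F -> int) (pi : F)
  (HF : dyadic_local_field ord pi)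
  (rho : F) (Hrho : unitO ord rho)
  (HDelta : forall y, dfrak ord (1 - 4 * rho) y <-> inI ord 4 y)
  (kappa : F) (Hkappa : unitO ord kappa)
  (Hdk : d_eq ord pi kappa (2 * e_F ord - 1))
  (delta : F) (Hdelta : unitO ord delta)
  (r s : F) (Hr : unitO ord r) (Hs : unitO ord s)
  (Hrs : kappa = s ^+ 2 * (1 + r * pi ^ (2 * e_F ord - 1))) :
  let Delta := 1 - 4 * rho in
  let kappa_sharp := 1 + 4 * rho * r^-1 * pi ^ (1 - 2 * e_F ord) in
  let G := orth_unary (gramA (2^-1 * pi) 2 (2 * rho)) (Delta * delta) in
  exists x1 x2 x3 : 'rV[F]_3,
    isBONG ord G (@std_lattice F ord 3) [:: x1; x2; x3] /\
    qf G x1 = delta * kappa_sharp /\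
    qf G x2 = - delta * kappa_sharp * kappa * pi ^ (2 - 2 * e_F ord) /\
    qf G x3 = delta * kappa.
Proof.
have [n ord2] : exists n : nat, e_F ord = n.+1%:Z.
  by exists (absz (ord 2)).-1; have := dyadic HF; rewrite /e_F; lia.
have [E1 -> ->] := exprz_twice_shifted pi ord2; rewrite {}E1 in Hrs; subst kappa.
cbv zeta; pose q := pi ^+ n; rewrite -/q.
have [y [y_small y_root]] : exists y, val_ge ord 1 y /\ y ^+ 2 + y = rho * r * (pi * q ^+ 2).
  apply: (artin_schreier_root HF); rewrite -mulrA.
  apply: (inO_val_geM HF (unitO_inO Hrho)); apply: (inO_val_geM HF (unitO_inO Hr)).
  exact: (val_geM_inO HF (val_ge_pi HF) (inOX HF 2 (inOX HF n (val_geW _ (val_ge_pi HF))))).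
have V_unit : unitO ord (delta * r * s ^+ 2 * kappa_sharp pi q r rho).
  apply: (unitOM HF); last by apply: (kappa_sharp_unit HF).
  by do 2 apply: (unitOM HF) => //; rewrite expr2; apply: (unitOM HF).
have [u1 [u2 [u1O u2O u_norm]]] := norm_form_surjective HF Hrho V_unit.
exists (x1 pi q r s rho y u1 u2), (x2 pi q r s rho delta y u1 u2), (x3 q s u1 u2).
by apply: (witnesses_spec HF) => //; apply: val_geW y_small.
Qed.
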